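(* Let $g\le3$ and let $W$ be a $\mathbb{C}$-vector space of dimension $g$ of quadratic forms on $\mathbb{C}^g$, containing a non-degenerate quadratic form. Then there exists a vector $v\in\mathbb{C}^g$ which is not in the kernel of any non-zero quadratic form in $W$.
   Context: The kernel of a quadratic form $q$ on $\mathbb{C}^g$ is the kernel of its associated symmetric bilinear form (equivalently of its symmetric matrix). *)

From HB Require Import structures.
From mathcomp Require Import all_boot all_algebra.
From mathcomp Require Import reals complex.
Set Implicit Arguments. Unset Strict Implicit. Unset Printing Implicit Defensive.
Import GRing.Theory.
Local Open Scope ring_scope.

(* The complex numbers are modelled as R[i] for R : realType (the reals).
   A quadratic form on C^g is identified with its symmetric g x g matrix. *)

Definition is_qform (K : fieldType) (g : nat) (q : 'M[K]_g) : bool := q^T == q.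

Definition qf_nondegenerate (K : fieldType) (g : nat) (q : 'M[K]_g) : bool :=
  q \in unitmx.

Definition in_qkernel (K : fieldType) (g : nat) (q : 'M[K]_g) (v : 'cV[K]_g) : bool :=
  q *m v == 0.

From HB Require Import structures.
From mathcomp Require Import all_boot all_algebra.
From mathcomp Require Import reals complex.
From mathcomp Require Import ring.
Set Implicit Arguments. Unset Strict Implicit. Unset Printing Implicit Defensive.
Import GRing.Theory Num.Theory.
Local Open Scope ring_scope.

(* Over an algebraically closed field of characteristic not 2, a nondegenerate
   quadratic form is congruent to the sum of squares, so after the change of
   variables q |-> P^T q P we may assume that W contains the identity.  For
   g = 3 write W = <1, A, B>: a vector v lies in the kernel of a nonzero element
   of W iff v, Av, Bv are linearly dependent, i.e. iff det(v, Av, Bv) = 0.  This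
   cubic form is bilinear and alternating in the classes of A and B modulo
   scalars, and for symmetric A, B the 2 x 2 minors of their coordinates in
   Sym_3 / K.1 = K^5 can be read off from its values at ten points.  If it
   vanished everywhere, A and B would thus be proportional modulo scalars,
   against dim W = 3.  For g = 2 the same argument says that a matrix of which
   every vector is an eigenvector is scalar. *)

Section FreeFamilies.
Variables (K : fieldType) (V : vectType K).

Lemma free2P (x y : V) :
  reflect (forall a b, a *: x + b *: y = 0 -> a = 0 /\ b = 0) (free [:: x; y]).
Proof.
apply: (iffP (@freeP _ _ _ (in_tuple [:: x; y]))) => [fr a b xy0 | fr k].
  have := fr (fun i => [:: a; b]`_i); rewrite !big_ord_recl big_ord0 addr0.
  by move=> /(_ xy0) k0; split; [apply: (k0 0) | apply: (k0 1)].
rewrite !big_ord_recl big_ord0 addr0 => /fr[k0 k1] [[|[|//]] i] /=.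
  by rewrite -k0; congr k; apply: val_inj.
by rewrite -k1; congr k; apply: val_inj.
Qed.

Lemma free3P (x y z : V) :
  reflect (forall a b c, a *: x + b *: y + c *: z = 0 -> [/\ a = 0, b = 0 & c = 0])
          (free [:: x; y; z]).
Proof.
apply: (iffP (@freeP _ _ _ (in_tuple [:: x; y; z]))) => [fr a b c xyz0 | fr k].
  have := fr (fun i => [:: a; b; c]`_i).
  rewrite !big_ord_recl big_ord0 addr0 addrA => /(_ xyz0) k0.
  by split; [apply: (k0 0) | apply: (k0 1) | apply: (k0 2)].
rewrite !big_ord_recl big_ord0 addr0 addrA => /fr[k0 k1 k2] [[|[|[|//]]] i] /=.
- by rewrite -k0; congr k; apply: val_inj.
- by rewrite -k1; congr k; apply: val_inj.
- by rewrite -k2; congr k; apply: val_inj.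
Qed.

Lemma free_map_inj (W : vectType K) (f : {linear V -> W}) (X : seq V) :
  injective f -> free (map f X) = free X.
Proof.
move=> f_inj; rewrite /free size_map.
have -> : map f X = map (linfun f) X by apply: eq_map => x; rewrite lfunE.
rewrite -limg_span limg_dim_eq //; apply/eqP; rewrite -subv0.
have /lker0P inj : injective (linfun f) by move=> x y; rewrite !lfunE; apply: f_inj.
by rewrite (eqP inj) capv0.
Qed.

Lemma basis_of_cons_diffv (U : {vspace V}) x :
  x \in U -> x != 0 -> basis_of U (x :: vbasis (U :\: <[x]>)).
Proof.
move=> xU x0; have xsubU : (<[x]> <= U)%VS by rewrite -memvE.
have spanU : (<<x :: vbasis (U :\: <[x]>)>> = U)%VS.
  by rewrite span_cons (span_basis (vbasisP _)) addvC addv_diff; apply/addv_idPl.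
rewrite /basis_of spanU eqxx /free spanU /= size_tuple.
by rewrite -(dimv_cap_compl U <[x]>) (capv_idPr xsubU) dim_vline x0.
Qed.

End FreeFamilies.

Lemma span_mulmx_eq0 (K : fieldType) (n : nat) (s : seq 'M[K]_n) (v : 'cV[K]_n) q :
  free [seq X *m v | X <- s] -> q \in <<s>>%VS -> q *m v = 0 -> q = 0.
Proof.
move=> /(@freeP _ _ _ (map_tuple (mulmxr v) (in_tuple s))) fr.
move=> /(@coord_span _ _ _ (in_tuple s)) -> qv0; rewrite big1 // => i _.
rewrite (fr (fun j => coord (in_tuple s) j q)) ?scale0r //.
rewrite -[RHS]qv0 mulmx_suml; apply: eq_bigr => j _.
by rewrite -scalemxAl (nth_map 0) ?size_tuple.
Qed.

Section CongruenceOfFamilies.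
Variables (K : fieldType) (n : nat) (P : 'M[K]_n).
Hypothesis P_unit : P \in unitmx.
Let PT_unit : P^T \in unitmx. Proof. by rewrite unitmx_tr. Qed.

Lemma free_congruent (s : seq 'M[K]_n) : free [seq P^T *m X *m P | X <- s] = free s.
Proof.
have inj : injective (mulmxr P \o mulmx P^T).
  by move=> X Y /= /(can_inj (mulmxK P_unit))/(can_inj (mulKmx PT_unit)).
by rewrite -[RHS](free_map_inj _ inj).
Qed.

Lemma free_eval_congruent (s : seq 'M[K]_n) (v : 'cV[K]_n) :
  free [seq P^T *m X *m P *m v | X <- s] = free [seq X *m (P *m v) | X <- s].
Proof.
rewrite -[RHS](free_map_inj _ (can_inj (mulKmx PT_unit))) -map_comp.
by congr free; apply: eq_map => X /=; rewrite !mulmxA.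
Qed.
End CongruenceOfFamilies.

Lemma sum_mul_delta2 (R : comRingType) n (f : 'I_n -> R) (a b : 'I_n) t :
  \sum_k f k * ((k == a)%:R + t * (k == b)%:R) = f a + t * f b.
Proof.
have sum_delta c : \sum_k f k * (k == c)%:R = f c.
  by rewrite (bigD1 c) //= eqxx mulr1 big1 ?addr0 // => k /negbTE->; rewrite mulr0.
under eq_bigr => k _ do rewrite mulrDr mulrCA.
by rewrite big_split /= -mulr_sumr !sum_delta.
Qed.

Section Congruence.
Variable K : closedFieldType.
Hypothesis two_neq0 : 2 != 0 :> K.

Lemma closed_sqrt (d : K) : exists s, s * s = d.
Proof.
have [s] := @solve_monicpoly _ 2 (fun i => if i == 0%N then d else 0) isT.
rewrite !big_ord_recl big_ord0 /= expr0 mulr1 mul0r !addr0 => <-.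
by exists s.
Qed.

Lemma sym_congr_corner_neq0 n (q : 'M[K]_n.+1) : q^T = q -> q \in unitmx ->
  exists2 T : 'M[K]_n.+1, T \in unitmx & (T^T *m q *m T) ord0 ord0 != 0.
Proof.
move=> qsym qunit.
have [j q0j] : exists j, q ord0 j != 0.
  apply/existsP; apply: contraTT qunit => /existsPn q0.
  rewrite unitmxE (expand_det_row _ ord0) big1 ?unitr0 // => j _.
  by rewrite (eqP (negPn (q0 j))) mul0r.
have [q00 | ] := eqVneq (q ord0 ord0) 0; last first.
  by exists 1%:M; rewrite ?unitmx1 // trmx1 mul1mx mulmx1.
have j0 : j != ord0 by apply: contraNneq q0j => ->; rewrite q00.
pose X t : 'M[K]_n.+1 := 1%:M + t *: delta_mx j ord0.
have X_unit t : X t \in unitmx.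
  have : X t *m X (- t) = 1%:M.
    rewrite mulmxDl !mulmxDr !mul1mx mulmx1 -!scalemxAl -!scalemxAr.
    rewrite mul_delta_mx_cond eq_sym (negbTE j0) mulr0n !scaler0 addr0.
    by rewrite scaleNr addrNK.
  by case/mulmx1_unit.
have X00 t : ((X t)^T *m q *m X t) ord0 ord0 = t * (2 * q ord0 j + t * q j j).
  have Xk0 k : X t k ord0 = (k == ord0)%:R + t * (k == j)%:R.
    by rewrite !mxE eqxx andbT.
  rewrite mxE; under eq_bigr => l _ do rewrite Xk0.
  rewrite sum_mul_delta2 !mxE.
  under eq_bigr => k _ do rewrite mxE Xk0 mulrC.
  under [S in _ + t * S = _]eq_bigr => k _ do rewrite mxE Xk0 mulrC.
  have qji : q j ord0 = q ord0 j by rewrite -{1}qsym mxE.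
  by rewrite !sum_mul_delta2 q00 qji; ring.
have [qjj | qjj] := eqVneq (2 * q ord0 j + q j j) 0; last first.
  by exists (X 1) => //; rewrite X00 !mul1r.
exists (X (-1)) => //; rewrite X00 mulf_neq0 ?oppr_eq0 ?oner_eq0 //.
have -> : q j j = - (2 * q ord0 j) by rewrite -[q j j](addKr (2 * q ord0 j)) qjj addr0.
by rewrite (_ : _ + _ = 2 * 2 * q ord0 j) ?mulf_neq0 //; ring.
Qed.

Lemma sym_congr_schur n (q : 'M[K]_(1 + n)) :
  q^T = q -> q \in unitmx -> q ord0 ord0 != 0 ->
  exists2 E : 'M[K]_(1 + n), E \in unitmx &
    exists2 Q : 'M[K]_n, Q^T = Q /\ Q \in unitmx & E^T *m q *m E = block_mx 1%:M 0 0 Q.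
Proof.
move=> qsym qunit d0; set d := q ord0 ord0 in d0.
set r := ursubmx q; set Q := drsubmx q.
have qE : q = block_mx d%:M r r^T Q.
  rewrite -[q in LHS]submxK /r trmx_ursub qsym [ulsubmx q]mx11_scalar mxE.
  by rewrite mxE; congr (block_mx (q _ _)%:M _ _ _); apply: val_inj.
have [s s2] := closed_sqrt d.
have s0 : s != 0 by apply: contraNneq d0 => s0; rewrite -s2 s0 mul0r.
pose E : 'M[K]_(1 + n) := block_mx (s^-1)%:M (- (d^-1 *: r)) 0 1%:M.
pose Q' := Q - d^-1 *: (r^T *m r).
have EqE : E^T *m q *m E = block_mx 1%:M 0 0 Q'.
  rewrite qE /E tr_block_mx !mulmx_block !tr_scalar_mx trmx0.
  rewrite !mul0mx !mulmx0 !mul1mx !mulmx1 ?add0r ?addr0 -!scalar_mxM.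
  have -> : s^-1 * d * s^-1 = 1 by rewrite -s2; field.
  have -> : (s^-1 * d)%:M *m - (d^-1 *: r) + (s^-1)%:M *m r = 0.
    by rewrite !mul_scalar_mx scalerN scalerA -mulrA mulfV // mulr1 addNr.
  have -> : (- (d^-1 *: r))^T *m d%:M + r^T = 0.
    by rewrite linearN linearZ /= mul_mx_scalar scalerN scalerA mulfV // scale1r addNr.
  by rewrite !mul0mx add0r linearN linearZ /= mulNmx -scalemxAl addrC.
have E_unit : E \in unitmx.
  by rewrite unitmxE det_ublock det_scalar1 det1 mulr1 unitfE invr_eq0.
exists E => //; exists Q' => //; split.
  by rewrite /Q' linearB linearZ /= trmx_mul trmxK /Q trmx_drsub qsym.
have : E^T *m q *m E \in unitmx by rewrite !unitmx_mul unitmx_tr E_unit qunit.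
by rewrite EqE !unitmxE det_ublock det1 mul1r.
Qed.

Lemma sym_unitmx_congr1 n (q : 'M[K]_n) : q^T = q -> q \in unitmx ->
  exists2 P : 'M[K]_n, P \in unitmx & P^T *m q *m P = 1%:M.
Proof.
elim: n q => [|n IHn] q qsym qunit.
  by exists 1%:M; [exact: unitmx1 | apply/matrixP => -[]].
have [T T_unit qT] := sym_congr_corner_neq0 qsym qunit.
have [|||E E_unit [Q [Qsym Q_unit] EqE]] := @sym_congr_schur n (T^T *m q *m T).
- by rewrite !trmx_mul trmxK qsym mulmxA.
- by rewrite !unitmx_mul unitmx_tr T_unit qunit.
- exact: qT.
have [P P_unit QP] := IHn Q Qsym Q_unit.
exists (T *m E *m block_mx 1%:M 0 0 P).
  by rewrite !unitmx_mul T_unit E_unit unitmxE (@det_ublock _ 1 n) det1 mul1r -unitmxE.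
set B := block_mx _ _ _ _.
have -> : (T *m E *m B)^T *m q *m (T *m E *m B) = B^T *m (E^T *m (T^T *m q *m T) *m E) *m B.
  by rewrite !trmx_mul !mulmxA.
rewrite EqE /B tr_block_mx !trmx0 tr_scalar_mx !mulmx_block.
by rewrite !mul0mx !mulmx0 !mul1mx !mulmx1 ?add0r ?addr0 QP mul0mx -(@scalar_mx_block _ 1 n).
Qed.
End Congruence.

Section Pencils.
Variable K : fieldType.

Lemma proportional_of_minors k (u w : 'I_k -> K) :
    (forall i j : 'I_k, (i < j)%N -> u i * w j = u j * w i) ->
  exists l m, (l, m) != (0, 0) /\ forall i, l * u i + m * w i = 0.
Proof.
move=> minors; have minor (i j : 'I_k) : u i * w j = u j * w i.
  by case: (ltngtP i j) => [/minors | /minors -> | /val_inj ->].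
have [i ui | u0] := pickP (fun i => u i != 0).
  exists (w i), (- u i); split; first by rewrite xpair_eqE oppr_eq0 (negbTE ui) andbF.
  by move=> j; rewrite mulNr [w i * _]mulrC minor subrr.
exists 1, 0; split; first by rewrite xpair_eqE oner_eq0.
by move=> j; have /negbFE/eqP -> := u0 j; rewrite mulr0 mul0r addr0.
Qed.

Lemma ord2P (i : 'I_2) : i = 0 \/ i = 1.
Proof. by case: i => [[|[|//]] ?]; [left | right]; apply: val_inj. Qed.

Lemma ord3P (i : 'I_3) : [\/ i = 0, i = 1 | i = 2].
Proof.
by case: i => [[|[|[|//]]] ?]; [constructor 1 | constructor 2 | constructor 3]; apply: val_inj.
Qed.

Definition col2 (x y : K) : 'cV[K]_2 := \col_i [:: x; y]`_i.
Definition col3 (x y z : K) : 'cV[K]_3 := \col_i [:: x; y; z]`_i.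
Definition det2 (u w : 'cV[K]_2) : K := u 0 0 * w 1 0 - u 1 0 * w 0 0.
Definition det3 (u v w : 'cV[K]_3) : K :=
  u 0 0 * (v 1 0 * w 2 0 - v 2 0 * w 1 0) - u 1 0 * (v 0 0 * w 2 0 - v 2 0 * w 0 0)
  + u 2 0 * (v 0 0 * w 1 0 - v 1 0 * w 0 0).

Lemma mulmx_col2E (A : 'M[K]_2) x y i : (A *m col2 x y) i 0 = A i 0 * x + A i 1 * y.
Proof.
rewrite mxE !big_ord_recl big_ord0 addr0 !mxE /=.
by congr (A i _ * _ + A i _ * _); apply: val_inj.
Qed.

Lemma mulmx_col3E (A : 'M[K]_3) x y z i :
  (A *m col3 x y z) i 0 = A i 0 * x + A i 1 * y + A i 2 * z.
Proof.
rewrite mxE !big_ord_recl big_ord0 addr0 addrA !mxE /=.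
by congr (A i _ * _ + A i _ * _ + A i _ * _); apply: val_inj.
Qed.

Lemma det2_free (u w : 'cV[K]_2) : det2 u w != 0 -> free [:: u; w].
Proof.
move=> D0; apply/free2P => a b abw.
have aD : a * det2 u w = det2 (a *: u + b *: w) w by rewrite /det2 !mxE; ring.
have bD : b * det2 u w = det2 u (a *: u + b *: w) by rewrite /det2 !mxE; ring.
rewrite abw /det2 !mxE !(mul0r, mulr0, subrr) in aD bD.
by split; apply: (mulIf D0); rewrite mul0r.
Qed.

Lemma det3_free (u v w : 'cV[K]_3) : det3 u v w != 0 -> free [:: u; v; w].
Proof.
move=> D0; apply/free3P => a b c abc.
have aD : a * det3 u v w = det3 (a *: u + b *: v + c *: w) v w.
  by rewrite /det3 !mxE; ring.
have bD : b * det3 u v w = det3 u (a *: u + b *: v + c *: w) w.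
  by rewrite /det3 !mxE; ring.
have cD : c * det3 u v w = det3 u v (a *: u + b *: v + c *: w).
  by rewrite /det3 !mxE; ring.
rewrite abc /det3 !mxE !(mul0r, mulr0, subrr, addr0) in aD bD cD.
by split; apply: (mulIf D0); rewrite mul0r.
Qed.

Lemma pencil2_free_eval (A : 'M[K]_2) :
  free [:: 1%:M; A] -> exists v : 'cV[K]_2, free [:: v; A *m v].
Proof.
move=> free1A; pose F (v : 'cV[K]_2) := det2 v (A *m v).
have [/and4P[/eqP F10 /eqP F01 /eqP F11 _] | /allPn[v _ Fv]] :=
  boolP (all (fun v => F v == 0) [:: col2 1 0; col2 0 1; col2 1 1]);
  last by exists v; apply: det2_free.
have A10 : A 1 0 = 0 by rewrite -F10 /F /det2 !mulmx_col2E !mxE /=; ring.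
have A01 : A 0 1 = 0.
  by apply: oppr_inj; rewrite oppr0 -F01 /F /det2 !mulmx_col2E !mxE /=; ring.
have A11 : A 1 1 = A 0 0.
  apply/eqP; rewrite -subr_eq0 -F11 /F /det2 !mulmx_col2E !mxE /= A01 A10.
  by apply/eqP; ring.
have A_scalar : - A 0 0 *: 1%:M + 1 *: A = 0.
  apply/matrixP => i j; rewrite !mxE.
  by case: (ord2P i) (ord2P j) => -> [] -> /=; rewrite ?A01 ?A10 ?A11; ring.
by have [_ /eqP] := free2P _ _ free1A _ _ A_scalar; rewrite oner_eq0.
Qed.

(* Coordinates of a symmetric X in the quotient of Sym_3 by the scalar matrices. *)
Definition sym3_coords (X : 'M[K]_3) (i : 'I_5) : K :=
  [:: X 1 1 - X 0 0; X 2 2 - X 0 0; X 0 1; X 0 2; X 1 2]`_i.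

Lemma sym3_coords_eq0 (X : 'M[K]_3) :
  X^T = X -> (forall i, sym3_coords X i = 0) -> X = (X 0 0)%:M.
Proof.
move=> Xsym X0; have sX i j : X i j = X j i by rewrite -{1}Xsym mxE.
have /subr0_eq X11 := X0 0; have /subr0_eq X22 := X0 1.
have X01 := X0 2; have X02 := X0 3; have X12 := X0 4.
rewrite /sym3_coords /= in X11 X22 X01 X02 X12.
apply/matrixP => i j; rewrite mxE.
case: (ord3P i) (ord3P j) => -> [] -> //=; rewrite ?mulr1n ?mulr0n //;
  by rewrite ?(sX 1 0, sX 2 0, sX 2 1).
Qed.
Hypothesis two_neq0 : 2 != 0 :> K.

Definition sym3_test_points : seq 'cV[K]_3 :=
  [:: col3 1 0 0; col3 0 1 0; col3 0 0 1; col3 1 1 0; col3 1 (-1) 0;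
      col3 1 0 1; col3 1 0 (-1); col3 0 1 1; col3 0 1 (-1); col3 1 1 1].

(* det(v, Av, Bv) is a cubic form in v whose ten coefficients are linear in the
   ten 2 x 2 minors of the coordinates of A and B; inverting this relation
   writes twice each minor as a combination of values of the form at the test
   points. *)
Lemma sym3_minors_eq0 (A B : 'M[K]_3) : A^T = A -> B^T = B ->
    all (fun v => det3 v (A *m v) (B *m v) == 0) sym3_test_points ->
  forall i j : 'I_5, (i < j)%N ->
    sym3_coords A i * sym3_coords B j = sym3_coords A j * sym3_coords B i.
Proof.
move=> Asym Bsym.
pose F x y z := det3 (col3 x y z) (A *m col3 x y z) (B *m col3 x y z).
move=> /and5P[/eqP F100 /eqP F010 /eqP F001 /eqP F110 /and5P[/eqP F1N0 /eqP F101
  /eqP F10N /eqP F011 /andP[/eqP F01N /andP[/eqP F111 _]]]].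
have sA i j : A i j = A j i by rewrite -{1}Asym mxE.
have sB i j : B i j = B j i by rewrite -{1}Bsym mxE.
have symAB := (sA 1 0, sA 2 0, sA 2 1, sB 1 0, sB 2 0, sB 2 1).
have minor_eq c (x y : K) : c = 0 -> 2 * (x - y) = c -> x = y.
  by move=> -> /eqP; rewrite mulf_eq0 (negbTE two_neq0) subr_eq0 => /eqP.
move=> [[|[|[|[|[|//]]]]] ?] [[|[|[|[|[|//]]]]] ?] //= _; rewrite /sym3_coords /=; [
  apply: (minor_eq (2 * (F 1 0 0 + F 0 1 0 + F 0 0 1 - F 1 1 0 - F 1 0 1
                        - F 0 1 1 + F 1 1 1)))
| apply: (minor_eq (- F 0 1 1 + F 0 1 (-1) - F 1 0 1 + F 1 0 (-1)))
| apply: (minor_eq (F 1 1 0 - F 1 (-1) 0))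
| apply: (minor_eq (F 1 1 0 + F 1 (-1) 0))
| apply: (minor_eq (- F 1 0 1 + F 1 0 (-1)))
| apply: (minor_eq (F 0 1 1 + F 0 1 (-1) + F 1 1 0 - F 1 (-1) 0))
| apply: (minor_eq (- F 1 0 1 - F 1 0 (-1)))
| apply: (minor_eq (2 * F 1 0 0))
| apply: (minor_eq (- (2 * F 0 1 0)))
| apply: (minor_eq (2 * F 0 0 1)) ].
all: rewrite /F; first [
  by rewrite ?F100 ?F010 ?F001 ?F110 ?F1N0 ?F101 ?F10N ?F011 ?F01N ?F111; ring
| by rewrite /det3 !mulmx_col3E !mxE /= !symAB; ring ].
Qed.

Lemma sym_pencil3_free_eval (A B : 'M[K]_3) : A^T = A -> B^T = B ->
  free [:: 1%:M; A; B] -> exists v : 'cV[K]_3, free [:: v; A *m v; B *m v].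
Proof.
move=> Asym Bsym free1AB.
have [F0 | /allPn[v _ Fv]] := boolP (all (fun v => det3 v (A *m v) (B *m v) == 0)
    sym3_test_points); last by exists v; apply: det3_free.
have [l [m [lm0 lmAB]]] := proportional_of_minors (sym3_minors_eq0 Asym Bsym F0).
pose X := l *: A + m *: B.
have X_scalar : X = (X 0 0)%:M.
  apply: sym3_coords_eq0 => [|i]; first by rewrite linearD !linearZ /= Asym Bsym.
  rewrite -(lmAB i) /sym3_coords /X.
  by case: i => [[|[|[|[|[|?]]]]] ?] /=; rewrite ?mxE ?nth_nil; ring.
have [_ l0 m0] : [/\ - X 0 0 = 0, l = 0 & m = 0].
  apply: (free3P _ _ _ free1AB); rewrite -addrA -/X scalemx1.
  by rewrite [in X in _ + X]X_scalar -raddfD /= addNr raddf0.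
by move: lm0; rewrite l0 m0 eqxx.
Qed.

Lemma exists_free_eval n (s : seq 'M[K]_n) : (n <= 3)%N -> (size s).+1 = n ->
    (forall X, X \in s -> X^T = X) -> free (1%:M :: s) ->
  exists v : 'cV[K]_n, free [seq X *m v | X <- 1%:M :: s].
Proof.
move=> + /eqP; case: n s => [|[|[|[|//]]]] [|A [|B [|C s]]] //= _ _ sym fr.
- by exists 1%:M; rewrite mul1mx.
- by have [v fv] := pencil2_free_eval fr; exists v; rewrite mul1mx.
have [||v fv] := sym_pencil3_free_eval _ _ fr; rewrite ?sym ?inE ?eqxx ?orbT //.
by exists v; rewrite mul1mx.
Qed.
End Pencils.

Theorem lemma6p1 (R : realType) (g : nat) (W : {vspace 'M[R[i]]_g}) :
  (g <= 3)%N ->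
  \dim W = g ->
  (forall q : 'M[R[i]]_g, q \in W -> is_qform q) ->
  (exists2 q0 : 'M[R[i]]_g, q0 \in W & qf_nondegenerate q0) ->
  exists v : 'cV[R[i]]_g,
    forall q : 'M[R[i]]_g, q \in W -> q != 0 -> ~~ in_qkernel q v.
Proof.
case: g W => [|g] W g_le3 dimW qformW [q0 q0W q0_unit].
  by exists 0 => q _; rewrite [q]flatmx0 eqxx.
have symW q : q \in W -> q^T = q by move/qformW/eqP.
have two_neq0 : 2 != 0 :> R[i] by rewrite pnatr_eq0.
have q0_neq0 : q0 != 0.
  by apply: contraTneq q0_unit => ->; rewrite /qf_nondegenerate unitmxE det0 unitr0.
have [P P_unit q0P] := sym_unitmx_congr1 two_neq0 (symW q0 q0W) q0_unit.
have /andP[/eqP spanW free_q0s] := basis_of_cons_diffv q0W q0_neq0.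
set s := vbasis _ in spanW free_q0s.
have sW X : X \in s -> X \in W by move/vbasis_mem/(subvP (diffvSl _ _)).
have [||| v free_v] := @exists_free_eval _ two_neq0 _ [seq P^T *m X *m P | X <- s] g_le3.
- by rewrite size_map -[(size s).+1]/(size (q0 :: s)) -(eqP free_q0s) spanW dimW.
- by move=> _ /mapP[X /sW/symW Xsym ->]; rewrite !trmx_mul trmxK Xsym mulmxA.
- by rewrite -q0P -[_ :: _]/(map _ (q0 :: s)) free_congruent.
exists (P *m v) => q qW; apply: contraNN => /eqP qPv; apply/eqP.
apply: (span_mulmx_eq0 (s := q0 :: s) _ _ qPv); last by rewrite spanW.
by rewrite -(free_eval_congruent P_unit) /= q0P; rewrite /= -map_comp in free_v.
Qed.
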